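(* If $(X,Q)$ is an $\varepsilon$-representative sequence for a $c$-expensive ($c>0$), oddly- or evenly-priced mechanism $M$ and a distribution $\mathcal{D}$, then for every index $i\ge1$, $\mathrm{gap}_i^{X,Q}\ge p^M(\vec x_i)/2$.
   Context: A mechanism $M$ is a set of options $(\vec q,p)$, $\vec q\in[0,1]^k$, $p\in\mathbb{R}$, containing $(\vec0,0)$; a buyer with values $\vec v\in\mathbb{R}^k_{\ge0}$ selects an option maximizing $\vec v\cdot\vec q-p$, with price $p^M(\vec v)$ and allocation $\vec q^M(\vec v)$. $M$ is $c$-expensive if every non-null option has price $\ge c$; oddly-priced (resp. evenly-priced) if every non-null option price lies in $[c2^i,c2^{i+1})$ for an odd (resp. even) integer $i$. $\varepsilon$-representative sequence: $\vec q_0=\vec0$; $a=1$ if oddly-priced, $a=0$ if evenly-priced; $B_j:=\{\vec v\in\mathrm{supp}(\mathcal{D}):p^M(\vec v)\in[c2^{2(j-1)+a},c2^{2(j-1)+a+1})\}$; for nonempty $B_j$ pick $\vec x_j\in B_j$ with $\|\vec x_j\|_1\le(1+\varepsilon)\|\vec v\|_1$ for all $\vec v\in B_j$ and $\vec q_j:=\vec q^M(\vec x_j)$; empty buckets omitted, indices shifted. $\mathrm{gap}_i^{X,Q}:=\min_{0\le j<i}(\vec q_i-\vec q_j)\cdot\vec x_i$. *)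

From HB Require Import structures.
From mathcomp Require Import all_boot all_order all_algebra.
Set Implicit Arguments. Unset Strict Implicit. Unset Printing Implicit Defensive.
Import Order.TTheory GRing.Theory Num.Theory.
Local Open Scope ring_scope.

Section Mech.
Variables (R : realFieldType) (k : nat).

Notation vec := 'rV[R]_k.
(* an option (q, p) *)
Notation opt := (vec * R)%type.

Definition dot (v w : vec) : R := \sum_(l < k) v 0 l * w 0 l.
Definition norm1 (v : vec) : R := \sum_(l < k) `|v 0 l|.
Definition nonneg_vec (v : vec) : Prop := forall l, 0 <= v 0 l.

Definition null_opt : opt := (0, 0).

Definition is_mechanism (M : opt -> Prop) : Prop :=
  M null_opt /\ forall o, M o -> forall l, 0 <= o.1 0 l <= 1.

Definition utility (v : vec) (o : opt) : R := dot v o.1 - o.2.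

(* sel v is the option selected by a buyer with values v (arbitrary
   tie-breaking): it belongs to M and maximizes utility over M. *)
Definition buyer_choice (M : opt -> Prop) (sel : vec -> opt) : Prop :=
  forall v, nonneg_vec v ->
    M (sel v) /\ forall o, M o -> utility v o <= utility v (sel v).

Definition price (sel : vec -> opt) (v : vec) : R := (sel v).2.
Definition alloc (sel : vec -> opt) (v : vec) : vec := (sel v).1.

Definition c_expensive (c : R) (M : opt -> Prop) : Prop :=
  forall o, M o -> o <> null_opt -> c <= o.2.

Definition oddly_priced (c : R) (M : opt -> Prop) : Prop :=
  forall o, M o -> o <> null_opt ->
    exists i : int, odd `|i|%N /\ c * 2%:R ^ i <= o.2 < c * 2%:R ^ (i + 1).

Definition evenly_priced (c : R) (M : opt -> Prop) : Prop :=
  forall o, M o -> o <> null_opt ->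
    exists i : int, ~~ odd `|i|%N /\ c * 2%:R ^ i <= o.2 < c * 2%:R ^ (i + 1).

Definition bucket (c : R) (a : nat) (sel : vec -> opt) (S : vec -> Prop)
    (j : nat) (v : vec) : Prop :=
  S v /\ c * 2%:R ^+ (2 * (j - 1) + a) <= price sel v < c * 2%:R ^+ (2 * (j - 1) + a + 1).

(* The indices i >= 1 of the
   sequence are those with I i (a down-closed initial segment of {1,2,...},
   possibly infinite); b i is the bucket index of the i-th element; the map
   i |-> b i enumerates the nonempty buckets in increasing order. *)
Definition rep_seq (eps c : R) (a : nat) (sel : vec -> opt) (S : vec -> Prop)
    (I : nat -> Prop) (b : nat -> nat) (x q : nat -> vec) : Prop :=
  [/\ (forall i, I i -> (0 < i)%N) /\ (forall i, I i.+2 -> I i.+1),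
      q 0%N = 0,
      forall i, I i ->
        [/\ (0 < b i)%N, bucket c a sel S (b i) (x i),
            (forall v, bucket c a sel S (b i) v -> norm1 (x i) <= (1 + eps) * norm1 v)
          & q i = alloc sel (x i)],
      forall i j, I i -> I j -> (i < j)%N -> (b i < b j)%N
    & forall j v, (0 < j)%N -> bucket c a sel S j v -> exists i, I i /\ b i = j].

(* gap_i = min_{0 <= j < i} (q_i - q_j) . x_i   (used for i >= 1) *)
Definition gap (x q : nat -> vec) (i : nat) : R :=
  \big[Num.min/dot (q i - q 0%N) (x i)]_(0 <= j < i) dot (q i - q j) (x i).

End Mech.

From HB Require Import structures.
From mathcomp Require Import all_boot all_order all_algebra.
From mathcomp Require Import lra zify.
Set Implicit Arguments. Unset Strict Implicit. Unset Printing Implicit Defensive.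
Import Order.TTheory GRing.Theory Num.Theory.
Local Open Scope ring_scope.

(* Incentive compatibility of the buyer x_i against the option of x_j gives
   (q_i - q_j) . x_i >= p_i - p_j, and against the null option (q_i - q_0) . x_i >= p_i.
   Buckets are separated by a factor 4 in price, so every earlier representative
   pays less than p_i / 2; hence each term of the minimum defining gap_i is at
   least p_i / 2. *)

Section Mechanism.
Variables (R : realFieldType) (k : nat).
Implicit Types (u v w : 'rV[R]_k) (sel : 'rV[R]_k -> 'rV[R]_k * R).

Lemma dotC u v : dot u v = dot v u.
Proof. by apply: eq_bigr => l _; rewrite mulrC. Qed.

Lemma dotBl u w v : dot (u - w) v = dot u v - dot w v.
Proof. by rewrite /dot -sumrB; apply: eq_bigr => l _; rewrite !mxE mulrBl. Qed.

Lemma buyer_choice_gain M sel v o : buyer_choice M sel -> nonneg_vec v -> M o ->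
  price sel v - o.2 <= dot (alloc sel v - o.1) v.
Proof.
move=> choice v_ge0 Mo; have [_ /(_ o Mo)] := choice v v_ge0.
by rewrite /utility dotBl -/(alloc sel v) -/(price sel v) !(dotC v); lra.
Qed.

Lemma bucket_price_ge0 c a sel S j v :
  0 < c -> bucket c a sel S j v -> 0 <= price sel v.
Proof.
move=> c_gt0 [_ /andP[lo _]]; apply: le_trans lo.
by rewrite mulr_ge0 ?exprn_ge0 ?ltW.
Qed.

Lemma bucket_price_lt_half c a sel S j j' v w : 0 < c -> (0 < j < j')%N ->
  bucket c a sel S j v -> bucket c a sel S j' w -> price sel v < price sel w / 2%:R.
Proof.
move=> c_gt0 /andP[j_gt0 lt_jj'] [_ /andP[_ v_hi]] [_ /andP[w_lo _]].
apply: (lt_le_trans v_hi); rewrite ler_pdivlMr ?ltr0n //; apply: le_trans w_lo.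
by rewrite -mulrA ler_pM2l // -exprSr ler_eXn2l ?ler1n ?ltr1n //; lia.
Qed.

Lemma gap_ge (x q : nat -> 'rV[R]_k) i r : (0 < i)%N ->
  (forall j, (j < i)%N -> r <= dot (q i - q j) (x i)) -> r <= gap x q i.
Proof.
move=> i_gt0 r_le; rewrite /gap big_seq; elim/big_ind: _.
- exact: r_le.
- by move=> u w ru rw; rewrite le_min ru rw.
- by move=> j; rewrite mem_index_iota => /andP[_ /r_le].
Qed.

End Mechanism.

Lemma down_closed_ge1 (I : nat -> Prop) : (forall i, I i.+2 -> I i.+1) ->
  forall i j, I i -> (0 < j)%N -> (j <= i)%N -> I j.
Proof.
move=> I_down i j Ii j_gt0 le_ji; rewrite -(subnKC le_ji) in Ii.
elim: (i - j)%N Ii => [|d IH]; first by rewrite addn0.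
by case: j j_gt0 {le_ji} IH => // j _ IH; rewrite addnS addSn => /I_down.
Qed.

Theorem claim4p8 (R : realFieldType) (k : nat)
    (M : 'rV[R]_k * R -> Prop) (sel : 'rV[R]_k -> 'rV[R]_k * R)
    (S : 'rV[R]_k -> Prop) (c eps : R) (a : nat)
    (I : nat -> Prop) (b : nat -> nat) (x q : nat -> 'rV[R]_k) :
  0 < c -> 0 < eps ->
  is_mechanism M -> buyer_choice M sel ->
  (forall v, S v -> nonneg_vec v) ->
  c_expensive c M ->
  ((oddly_priced c M /\ a = 1%N) \/ (evenly_priced c M /\ a = 0%N)) ->
  rep_seq eps c a sel S I b x q ->
  forall i, I i -> price sel (x i) / 2%:R <= gap x q i.
Proof.
move=> c_gt0 _ [M_null _] choice S_ge0 _ _ [[I_gt0 I_down] q0 rep b_mono _] i Ii.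
have [_ Bi _ qi] := rep i Ii; have xi_ge0 := S_ge0 _ Bi.1.
apply: gap_ge (I_gt0 _ Ii) _ => -[_|j lt_ji].
  have := buyer_choice_gain choice xi_ge0 M_null.
  have := bucket_price_ge0 c_gt0 Bi.
  by rewrite q0 -qi /null_opt /=; lra.
have Ij : I j.+1 by apply: (down_closed_ge1 I_down Ii) => //; exact: ltnW.
have [bj_gt0 Bj _ qj] := rep _ Ij.
have b_lt : (0 < b j.+1 < b i)%N by rewrite bj_gt0 b_mono.
have := bucket_price_lt_half c_gt0 b_lt Bj Bi.
have [Mj _] := choice _ (S_ge0 _ Bj.1).
have := buyer_choice_gain choice xi_ge0 Mj.
by rewrite qi qj /alloc /price; lra.
Qed.
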